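(* Let $\mathcal{S}=(\sigma_{ij})\in\mathrm{SL}(2,\mathbb{Z})$ with $\mathrm{tr}(\mathcal{S})>2$, $\lambda>1$ its larger eigenvalue, and $P=(p_{ij})$ a real matrix with $\det P=1$ and $P\mathcal{S}P^{-1}=\mathrm{diag}(1/\lambda,\lambda)$. For real $c_1,c_2,c_3$ put $$\mathbf{t}_1=\begin{pmatrix}1&p_{11}&c_1\\0&1&p_{21}\\0&0&1\end{pmatrix},\ \mathbf{t}_2=\begin{pmatrix}1&p_{12}&c_2\\0&1&p_{22}\\0&0&1\end{pmatrix},\ \mathbf{t}_3=\begin{pmatrix}1&0&c_3\\0&\lambda&0\\0&0&1\end{pmatrix},\ \mathbf{t}_4^{s}=\begin{pmatrix}1&0&s\\0&1&0\\0&0&1\end{pmatrix}\ (s\in\mathbb{R}).$$ Then for any integers $q\ne0$, $m_1,m_2$ (and any $c_3$) there exist unique real $c_1,c_2$ for which these elements of $\mathrm{Sol}_1^4$ generate a group $\tilde\Gamma_{(\mathcal{S};q,m_1,m_2)}$ with the presentation $$\langle \mathbf{t}_1,\mathbf{t}_2,\mathbf{t}_3,\mathbf{t}_4^{1/q}\mid [\mathbf{t}_1,\mathbf{t}_2]=\mathbf{t}_4,\ \mathbf{t}_4\text{ central},\ \mathbf{t}_3\mathbf{t}_1\mathbf{t}_3^{-1}=\mathbf{t}_1^{\sigma_{11}}\mathbf{t}_2^{\sigma_{21}}\mathbf{t}_4^{m_1/q},\ \mathbf{t}_3\mathbf{t}_2\mathbf{t}_3^{-1}=\mathbf{t}_1^{\sigma_{12}}\mathbf{t}_2^{\sigma_{22}}\mathbf{t}_4^{m_2/q}\rangle;$$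 that is, unique $c_1,c_2$ for which the last two relations hold.
   Context: $\mathrm{Sol}_1^4$ is the group of real matrices $\begin{pmatrix}1&x&z\\0&e^u&y\\0&0&1\end{pmatrix}$. *)

From mathcomp Require Import all_boot all_order all_algebra.
From mathcomp Require Import reals.
Set Implicit Arguments. Unset Strict Implicit. Unset Printing Implicit Defensive.
Import Order.TTheory GRing.Theory Num.Theory.
Local Open Scope ring_scope.

Definition mx3 {R : ringType} (a b c d e f g h k : R) : 'M[R]_3 :=
  \matrix_(i < 3, j < 3)
    nth 0 (nth [::] [:: [:: a; b; c]; [:: d; e; f]; [:: g; h; k]] i) j.

Definition diag2 {R : ringType} (a b : R) : 'M[R]_2 :=
  \matrix_(i < 2, j < 2) (if i == j then (if val i == 0%N then a else b) else 0).

Definition tt1 {R : realType} (P : 'M[R]_2) (c1 : R) : 'M[R]_3 :=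
  mx3 1 (P 0 0) c1  0 1 (P 1 0)  0 0 1.
Definition tt2 {R : realType} (P : 'M[R]_2) (c2 : R) : 'M[R]_3 :=
  mx3 1 (P 0 1) c2  0 1 (P 1 1)  0 0 1.
Definition tt3 {R : realType} (lam c3 : R) : 'M[R]_3 :=
  mx3 1 0 c3  0 lam 0  0 0 1.
Definition tt4 {R : realType} (s : R) : 'M[R]_3 :=
  mx3 1 0 s  0 1 0  0 0 1.

(** Every generator involved is a Heisenberg matrix [heis a b c], and conjugation by [tt3]
    rescales its first two coordinates by [lam^-1] and [lam], just as [P S P^-1] rescales the
    coordinates of its eigenvectors. Hence the two relations hold in the abelianized
    coordinates automatically, and only their central entries impose conditions: an affine
    system [c = S^T c + K] in [c = (c1, c2)]. Its determinant [det (1 - S) = 2 - tr S] is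
    nonzero because [tr S > 2], so it has exactly one solution. *)

From mathcomp Require Import all_boot all_order all_algebra.
From mathcomp Require Import reals ring.
Import Order.TTheory GRing.Theory Num.Theory.
Local Open Scope ring_scope.

Definition heis {R : nzRingType} (a b c : R) : 'M[R]_3 := mx3 1 a c 0 1 b 0 0 1.

Local Ltac mx3_entries :=
  apply/matrixP; case=> [[|[|[|?]]] ?] //; case=> [[|[|[|?]]] ?] //;
  rewrite /tt3 /heis !(mxE, big_ord_recr, big_ord0) /=.

Section Heisenberg.
Variable R : numFieldType.
Implicit Types a b c : R.

Lemma heis_mul a b c a' b' c' :
  heis a b c *m heis a' b' c' = heis (a + a') (b + b') (c + c' + a * b').
Proof. by mx3_entries; ring. Qed.

Lemma heis0 : heis 0 0 0 = 1 :> 'M[R]_3.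
Proof. by mx3_entries. Qed.

Lemma heis_mulV a b c : heis a b c * heis (- a) (- b) (- c + a * b) = 1.
Proof. by rewrite -mulmxE heis_mul -heis0; congr heis; ring. Qed.

Lemma heis_unit a b c : heis a b c \is a GRing.unit.
Proof. by case: (mulmx1_unit (heis_mulV a b c)). Qed.

Lemma heisV a b c : (heis a b c)^-1 = heis (- a) (- b) (- c + a * b).
Proof. by rewrite -[RHS](mulKr (heis_unit a b c)) heis_mulV mulr1. Qed.

Lemma heis_exprn a b c (n : nat) : heis a b c ^+ n =
  heis (n%:R * a) (n%:R * b) (n%:R * c + n%:R * (n%:R - 1) / 2 * (a * b)).
Proof.
elim: n => [|n IH]; first by rewrite expr0 -heis0; congr heis; ring.
by rewrite exprSr IH -mulmxE heis_mul -natr1; congr heis; field.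
Qed.

Lemma heis_exprz a b c (n : int) : heis a b c ^ n =
  heis (n%:~R * a) (n%:~R * b) (n%:~R * c + n%:~R * (n%:~R - 1) / 2 * (a * b)).
Proof.
case: n => n; first by rewrite /exprz heis_exprn.
rewrite /exprz heis_exprn heisV NegzE mulrNz -!pmulrn -natr1.
by congr heis; field.
Qed.

Lemma heis_inj a b c a' b' c' :
  heis a b c = heis a' b' c' -> [/\ a = a', b = b' & c = c'].
Proof.
move=> E; have entry i j := congr1 (fun M : 'M[R]_3 => M i j) E.
by move: (entry 0 1) (entry 1 2) (entry 0 2); rewrite !mxE.
Qed.

End Heisenberg.

Lemma tt3_conj_heis (R : realType) (lam c3 a b c : R) : lam != 0 ->
  tt3 lam c3 *m heis a b c *m invmx (tt3 lam c3) = heis (lam^-1 * a) (lam * b) c.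
Proof.
move=> lam0; set T' := mx3 1 0 (- c3) 0 lam^-1 0 0 0 1.
have TT' : tt3 lam c3 *m T' = 1%:M by mx3_entries; rewrite ?mulfV //; ring.
have [Tunit _] := mulmx1_unit TT'.
have -> : invmx (tt3 lam c3) = T'.
  by rewrite -[LHS]mulmx1 -TT' mulmxA mulVmx // mul1mx.
by mx3_entries; field.
Qed.

(* The central entry of [heis a1 b1 0 ^ n *m heis a2 b2 0 ^ m]. *)
Definition heis_word_centre {R : numFieldType} (n m : int) (a1 b1 a2 b2 : R) : R :=
  n%:~R * (n%:~R - 1) / 2 * (a1 * b1) + m%:~R * (m%:~R - 1) / 2 * (a2 * b2)
  + n%:~R * a1 * (m%:~R * b2).

Lemma tt3_conj_relationP {R : realType} {lam a b a1 b1 a2 b2 : R} {n m : int}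
    (c3 z x y k : R) :
  lam != 0 -> lam^-1 * a = n%:~R * a1 + m%:~R * a2 -> lam * b = n%:~R * b1 + m%:~R * b2 ->
  tt3 lam c3 *m heis a b z *m invmx (tt3 lam c3)
    = heis a1 b1 x ^ n *m heis a2 b2 y ^ m *m heis 0 0 k
  <-> z = n%:~R * x + m%:~R * y + (heis_word_centre n m a1 b1 a2 b2 + k).
Proof.
move=> lam0 Ea Eb; rewrite tt3_conj_heis // !heis_exprz !heis_mul /heis_word_centre.
split=> [/heis_inj [_ _ ->] | Ez]; first by ring.
by congr heis; rewrite ?Ea ?Eb ?Ez; ring.
Qed.

Lemma affine2_fixpoint_unique {R : fieldType} {s00 s01 s10 s11 : R} (k1 k2 : R) :
  (1 - s00) * (1 - s11) - s10 * s01 != 0 ->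
  exists! c : R * R,
    c.1 = s00 * c.1 + s10 * c.2 + k1 /\ c.2 = s01 * c.1 + s11 * c.2 + k2.
Proof.
set d := _ - _ => d0.
exists (((1 - s11) * k1 + s10 * k2) / d, (s01 * k1 + (1 - s00) * k2) / d).
split; first by split; rewrite /= /d; field.
move=> [x y] /= [Ex Ey].
have -> : k1 = (1 - s00) * x - s10 * y by rewrite mulrBl mul1r {1}Ex; ring.
have -> : k2 = (1 - s11) * y - s01 * x by rewrite mulrBl mul1r {1}Ey; ring.
by congr pair; rewrite /d; field.
Qed.

Lemma det1_sub_neq0 {R : realFieldType} {s00 s01 s10 s11 : R} :
  s00 * s11 - s01 * s10 = 1 -> 2 < s00 + s11 ->
  (1 - s00) * (1 - s11) - s10 * s01 != 0.
Proof.
move=> det1 tr2.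
have -> : (1 - s00) * (1 - s11) - s10 * s01
          = 2 - (s00 + s11) + (s00 * s11 - s01 * s10 - 1) by ring.
by rewrite det1 subrr addr0 subr_eq0 lt_eqF.
Qed.

Lemma mulmx22E (R : comNzRingType) (M N : 'M[R]_2) i j :
  (M *m N) i j = M i 0 * N 0 j + M i 1 * N 1 j.
Proof.
rewrite mxE !big_ord_recr big_ord0 /= add0r.
by congr (M _ _ * N _ _ + M _ _ * N _ _); apply/val_inj.
Qed.

Lemma det_mx22 (R : comNzRingType) (M : 'M[R]_2) :
  \det M = M 0 0 * M 1 1 - M 0 1 * M 1 0.
Proof.
rewrite (expand_det_row _ 0) !big_ord_recr big_ord0 /cofactor !det_mx11 /= !mxE /=.
rewrite add0r expr0 expr1 !mul1r mulN1r mulrN.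
by congr (M _ _ * M _ _ - M _ _ * M _ _); apply/val_inj.
Qed.

Lemma trace_mx22 (R : comNzRingType) (M : 'M[R]_2) : \tr M = M 0 0 + M 1 1.
Proof.
rewrite /mxtrace !big_ord_recr big_ord0 /= add0r.
by congr (M _ _ + M _ _); apply/val_inj.
Qed.

Lemma diag2_mulmxE (R : comNzRingType) (a b : R) (M : 'M[R]_2) i j :
  (diag2 a b *m M) i j = (if i == 0 then a else b) * M i j.
Proof.
rewrite mulmx22E !mxE /=.
case: i => [[|[|//]] ?] /=; rewrite mul0r ?addr0 ?add0r.
all: by congr (_ * M _ _); apply/val_inj.
Qed.

Theorem lemma5p2 (R : realType) (S : 'M[int]_2) (lam : R) (P : 'M[R]_2)
  (hdetS : \det S = 1) (htrS : 2 < \tr S)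
  (hlam_eig : eigenvalue (map_mx (fun x : int => x%:~R : R) S) lam)
  (hlam_max : forall mu : R,
      eigenvalue (map_mx (fun x : int => x%:~R : R) S) mu -> mu <= lam)
  (hlam1 : 1 < lam)
  (hdetP : \det P = 1)
  (hconj : P *m map_mx (fun x : int => x%:~R : R) S *m invmx P
           = diag2 lam^-1 lam)
  (q m1 m2 : int) (hq : q != 0) (c3 : R) :
  exists! c : R * R,
    tt3 lam c3 *m tt1 P c.1 *m invmx (tt3 lam c3)
      = tt1 P c.1 ^ (S 0 0) *m tt2 P c.2 ^ (S 1 0) *m tt4 (m1%:~R / q%:~R)
    /\
    tt3 lam c3 *m tt2 P c.2 *m invmx (tt3 lam c3)
      = tt1 P c.1 ^ (S 0 1) *m tt2 P c.2 ^ (S 1 1) *m tt4 (m2%:~R / q%:~R).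
Proof.
set A := map_mx (fun x : int => x%:~R : R) S.
have lam0 : lam != 0 by rewrite gt_eqF // (lt_trans ltr01 hlam1).
have PA : P *m A = diag2 lam^-1 lam *m P.
  by rewrite -hconj mulmxKV // unitmxE hdetP unitr1.
have eig (i j : 'I_2) : (if i == 0 then lam^-1 else lam) * P i j
               = (S 0 j)%:~R * P i 0 + (S 1 j)%:~R * P i 1.
  by rewrite -diag2_mulmxE -PA mulmx22E !mxE mulrC [_ * P i 1]mulrC.
have S_det : (S 0 0)%:~R * (S 1 1)%:~R - (S 0 1)%:~R * (S 1 0)%:~R = 1 :> R.
  by rewrite -!intrM -intrB -det_mx22 hdetS.
have S_tr : 2 < (S 0 0)%:~R + (S 1 1)%:~R :> R.
  by rewrite -intrD -trace_mx22 (ltr_int R 2).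
pose K1 := heis_word_centre (S 0 0) (S 1 0) (P 0 0) (P 1 0) (P 0 1) (P 1 1) + m1%:~R / q%:~R.
pose K2 := heis_word_centre (S 0 1) (S 1 1) (P 0 0) (P 1 0) (P 0 1) (P 1 1) + m2%:~R / q%:~R.
have [c [c_fix c_uniq]] :=
  affine2_fixpoint_unique K1 K2 (det1_sub_neq0 S_det S_tr).
have rel1 c' := tt3_conj_relationP c3 c'.1 c'.1 c'.2 (m1%:~R / q%:~R) lam0 (eig 0 0) (eig 1 0).
have rel2 c' := tt3_conj_relationP c3 c'.2 c'.1 c'.2 (m2%:~R / q%:~R) lam0 (eig 0 1) (eig 1 1).
exists c; split; first by case: c_fix => ? ?; split; [apply/rel1 | apply/rel2].
by move=> c' [/rel1 ? /rel2 ?]; apply: c_uniq.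
Qed.
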